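(* There is an absolute constant $C>0$ such that the following holds. Let $A$ be a real $n\times n$ matrix, let $0<q\le n$, and let $Q$ be a random subset of $\{1,\dots,n\}$ in which each element is included independently with probability $q/n$. Then $$\mathbb E\,\|A|_{Q\times Q}\|_C\ \le\ C\Bigl(\Bigl(\frac qn\Bigr)^2\|A-D(A)\|_C+\frac qn\,\|D(A)\|_C+\Bigl(\frac qn\Bigr)^{3/2}\bigl(\|A\|_{\rm Col}+\|A^T\|_{\rm Col}\bigr)\Bigr).$$
   Context: The cut norm of a matrix $B=(B_{ij})$ is $\|B\|_C=\max_{I,J}\bigl|\sum_{i\in I,j\in J}B_{ij}\bigr|$, the maximum over all subsets $I$ of row indices and $J$ of column indices. $A|_{Q\times Q}=(A_{ij})_{i,j\in Q}$ is the principal submatrix on $Q$ (its cut norm is $0$ if $Q=\emptyset$). $D(A)$ is the diagonal part of $A$ (the matrix with the same diagonal as $A$ and zeros off the diagonal). $\|A\|_{\rm Col}$ is the sum of the Euclidean lengths of the columns of $A$. *)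

From HB Require Import structures.
From mathcomp Require Import all_boot all_order all_algebra.
From mathcomp Require Import Rstruct.
Set Implicit Arguments. Unset Strict Implicit. Unset Printing Implicit Defensive.
Import Order.TTheory GRing.Theory Num.Theory.
Local Open Scope ring_scope.

Definition RR := Rdefinitions.R.

Definition cutnorm (n : nat) (B : 'M[RR]_n) : RR :=
  \big[Num.max/0]_(I : {set 'I_n}) \big[Num.max/0]_(J : {set 'I_n})
     `| \sum_(i in I) \sum_(j in J) B i j |.

Definition cutnorm_sub (n : nat) (Q : {set 'I_n}) (B : 'M[RR]_n) : RR :=
  \big[Num.max/0]_(I : {set 'I_n} | I \subset Q)
    \big[Num.max/0]_(J : {set 'I_n} | J \subset Q)
     `| \sum_(i in I) \sum_(j in J) B i j |.

Definition diagpart (n : nat) (A : 'M[RR]_n) : 'M[RR]_n :=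
  \matrix_(i, j) (if i == j then A i j else 0).

Definition colnorm (n : nat) (A : 'M[RR]_n) : RR :=
  \sum_(j < n) Num.sqrt (\sum_(i < n) A i j ^+ 2).

(* Probability of the outcome Q when each element of {1..n} is included
   independently with probability p. *)
Definition binom_prob (n : nat) (p : RR) (Q : {set 'I_n}) : RR :=
  p ^+ #|Q| * (1 - p) ^+ (n - #|Q|)%N.

Definition expect_subset (n : nat) (p : RR) (f : {set 'I_n} -> RR) : RR :=
  \sum_(Q : {set 'I_n}) binom_prob p Q * f Q.

(* Write [A = B + D(A)]. On [Q x Q] the diagonal contributes at most
   [\sum_(i in Q) |A i i|], whose mean is [p \sum_i |A i i| <= 2 p ||D(A)||_C],
   and the zero-diagonal part [B] is controlled by the one-sided cuts of [B]
   and [- B].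
   A fair random subset [S] decouples such a cut, since each off-diagonal pair
   of [Q] lies in [(Q :&: S) x (Q :\: S)] with probability [1/4]. For fixed [S]
   the rows and the columns of the cut come from independent parts of [Q];
   passing to positive parts of row and column sums bounds the cut by
   [p^2 ||B||_C] plus suprema of centred linear forms in the indicators of [Q].
   These are symmetrized with an independent copy [Q'], the positive parts are
   removed by the contraction principle, and Cauchy-Schwarz bounds what remains
   by [sqrt (2 p)] times Euclidean lengths of columns (or rows) of [B]. *)

From HB Require Import structures.
From mathcomp Require Import all_boot all_order all_algebra.
From mathcomp Require Import Rstruct.
From mathcomp Require Import ring lra.
Import Order.TTheory GRing.Theory Num.Theory.
Set Implicit Arguments. Unset Strict Implicit. Unset Printing Implicit Defensive.
Local Open Scope ring_scope.

Definition ind n (k : 'I_n) (Q : {set 'I_n}) : RR := (k \in Q)%:R.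

Lemma setD1_notin (T : finType) (k : T) (Q : {set T}) : k \notin Q -> Q :\ k = Q.
Proof. by move=> kQ; apply/setDidPl; rewrite disjoint_sym disjoints1. Qed.

Lemma setD1U1 (T : finType) (k : T) (Q : {set T}) : (k |: Q) :\ k = Q :\ k.
Proof. by rewrite setDUl setDv set0U. Qed.

Lemma setD1D1 (T : finType) (k : T) (Q : {set T}) : (Q :\ k) :\ k = Q :\ k.
Proof. by rewrite setDDl setUid. Qed.

Lemma ind_setU1 n (j k : 'I_n) Q : j != k -> ind j (k |: Q) = ind j Q.
Proof. by move=> jk; rewrite /ind !inE (negbTE jk). Qed.

Lemma ind_setD1 n (j k : 'I_n) Q : j != k -> ind j (Q :\ k) = ind j Q.
Proof. by move=> jk; rewrite /ind !inE jk. Qed.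

Lemma ind_setU11 n (k : 'I_n) Q : ind k (k |: Q) = 1.
Proof. by rewrite /ind setU11. Qed.

Lemma ind_setD11 n (k : 'I_n) Q : ind k (Q :\ k) = 0.
Proof. by rewrite /ind setD11. Qed.

Lemma ind_ge0 n (k : 'I_n) Q : 0 <= ind k Q.
Proof. exact: ler0n. Qed.

Lemma indM_id n (k : 'I_n) Q : ind k Q * ind k Q = ind k Q.
Proof. by rewrite /ind; case: (k \in Q); rewrite ?mulr1 ?mulr0. Qed.

Lemma sum_setI_ind n (Q S : {set 'I_n}) (g : 'I_n -> RR) :
  \sum_(j in Q :&: S) g j = \sum_(j in S) ind j Q * g j.
Proof.
rewrite big_mkcond [RHS]big_mkcond; apply: eq_bigr => j _.
by rewrite /ind !inE andbC; case: (j \in S); case: (j \in Q); rewrite ?mul1r ?mul0r.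
Qed.

Lemma sum_setD_ind n (Q S : {set 'I_n}) (g : 'I_n -> RR) :
  \sum_(j in Q :\: S) g j = \sum_(j in Q) (1 - ind j S) * g j.
Proof.
rewrite big_mkcond [RHS]big_mkcond; apply: eq_bigr => j _.
rewrite /ind !inE andbC; case: (j \in Q) => //=.
by case: (j \in S); rewrite ?subrr ?mul0r ?subr0 ?mul1r.
Qed.

Section Expectation.

Variables (n : nat) (p : RR).
Implicit Types (f g : {set 'I_n} -> RR) (Q : {set 'I_n}).
Local Notation E := (@expect_subset n p).

Lemma eq_expect f g : f =1 g -> E f = E g.
Proof. by move=> fg; apply: eq_bigr => Q _; rewrite fg. Qed.

Lemma expectD f g : E (fun Q => f Q + g Q) = E f + E g.
Proof. by rewrite /expect_subset -big_split; apply: eq_bigr => Q _; rewrite mulrDr. Qed.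

Lemma expectZ c f : E (fun Q => c * f Q) = c * E f.
Proof. by rewrite /expect_subset mulr_sumr; apply: eq_bigr => Q _; rewrite mulrCA. Qed.

Lemma expectN f : E (fun Q => - f Q) = - E f.
Proof. by rewrite /expect_subset -sumrN; apply: eq_bigr => Q _; rewrite mulrN. Qed.

Lemma expect_sum (I : finType) (P : pred I) (F : I -> {set 'I_n} -> RR) :
  E (fun Q => \sum_(i | P i) F i Q) = \sum_(i | P i) E (F i).
Proof. by rewrite /expect_subset exchange_big; apply: eq_bigr => i _; rewrite mulr_sumr. Qed.

Lemma expect1 : E (fun=> 1) = 1.
Proof.
rewrite /expect_subset /binom_prob.
rewrite (partition_big (fun Q => (inord #|Q| : 'I_n.+1)) xpredT) //=.
transitivity ((1 - p + p) ^+ n); last by rewrite subrK expr1n.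
rewrite exprDn; apply: eq_bigr => j _.
have cardQ Q : ((inord #|Q| : 'I_n.+1) == j) = (#|Q| == j).
  apply/eqP/eqP => [<-|eQj]; last by apply: val_inj; rewrite /= eQj inordK.
  by rewrite inordK // ltnS -[n in (_ <= n)%N]card_ord max_card.
rewrite (eq_bigl _ _ cardQ) (eq_bigr (fun=> p ^+ j * (1 - p) ^+ (n - j))); last first.
  by move=> Q /eqP ->; rewrite mulr1.
rewrite sumr_const -[n in 'C(n, _)]card_ord -card_draws mulrC.
by congr (_ *+ _); apply: eq_card => Q; rewrite !inE.
Qed.

Lemma expect_cst c : E (fun=> c) = c.
Proof. by have := expectZ c (fun=> 1); rewrite expect1 mulr1. Qed.

Hypothesis p01 : 0 <= p <= 1.

Lemma binom_prob_ge0 Q : 0 <= binom_prob p Q.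
Proof. by case/andP: p01 => p0 p1; rewrite mulr_ge0 ?exprn_ge0 ?subr_ge0. Qed.

Lemma ler_expect f g : (forall Q, f Q <= g Q) -> E f <= E g.
Proof. by move=> fg; apply: ler_sum => Q _; rewrite ler_wpM2l ?binom_prob_ge0. Qed.

Lemma expect_ge0 f : (forall Q, 0 <= f Q) -> 0 <= E f.
Proof. by move=> f0; rewrite -(expect_cst 0) ler_expect. Qed.

Lemma expect_sqr_le f : E f ^+ 2 <= E (fun Q => f Q ^+ 2).
Proof.
set m := E f.
have variance : E (fun Q => (f Q - m) ^+ 2) = E (fun Q => f Q ^+ 2) - m ^+ 2.
  rewrite (eq_expect (g := fun Q => f Q ^+ 2 + (-2 * m * f Q + m ^+ 2))); last by move=> Q; ring.
  by rewrite !expectD expectZ expect_cst -/m; ring.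
by rewrite -subr_ge0 -variance; apply: expect_ge0 => Q; exact: sqr_ge0.
Qed.

Lemma expect_le_sqrt f : E f <= Num.sqrt (E (fun Q => f Q ^+ 2)).
Proof. by rewrite (le_trans (ler_norm _)) // -sqrtr_sqr ler_wsqrtr // expect_sqr_le. Qed.

End Expectation.

Section Resampling.

Variables (n : nat) (p : RR).
Implicit Types (Q : {set 'I_n}) (k l : 'I_n).
Local Notation E := (@expect_subset n p).

Lemma sum_sets_setU1 k (G : {set 'I_n} -> RR) :
  \sum_(Q : {set 'I_n}) G Q = \sum_(Q : {set 'I_n} | k \notin Q) (G Q + G (k |: Q)).
Proof.
rewrite (bigID (fun Q => k \in Q)) /= addrC big_split /=; congr (_ + _).
rewrite (reindex_onto (fun Q => k |: Q) (fun Q => Q :\ k)) /=; last first.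
  by move=> Q kQ; rewrite setD1K.
apply: eq_bigl => Q; rewrite setU11 /=.
by apply/eqP/idP => [<-|kQ]; [rewrite setD11 | rewrite setU1K].
Qed.

Lemma expect_resample k (F : {set 'I_n} -> RR) :
  E F = E (fun Q => p * F (k |: Q) + (1 - p) * F (Q :\ k)).
Proof.
rewrite /expect_subset !(sum_sets_setU1 k); apply: eq_bigr => Q kQ.
rewrite setD1_notin // setU1K // setUA setUid.
have cardkQ : #|k |: Q| = #|Q|.+1 by rewrite cardsU1 kQ.
have ltQn : (#|Q| < n)%N by rewrite -cardkQ -[n in (_ <= n)%N]card_ord max_card.
rewrite /binom_prob cardkQ subnS -(prednK (n := n - #|Q|)) ?subn_gt0 // !exprS /=.
ring.
Qed.

Lemma expect_indM k (G : {set 'I_n} -> RR) : (forall Q, G (k |: Q) = G (Q :\ k)) ->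
  E (fun Q => ind k Q * G Q) = p * E G.
Proof.
move=> Gk; rewrite (expect_resample k) -expectZ; apply: eq_expect => Q.
have GkQ : G (k |: Q) = G Q.
  by case: (boolP (k \in Q)) => kQ; [rewrite (setUidPr _) ?sub1set | rewrite Gk setD1_notin].
by rewrite ind_setU11 ind_setD11 GkQ mul1r mul0r mulr0 addr0.
Qed.

Lemma expect_ind k : E (ind k) = p.
Proof.
rewrite -[RHS]mulr1 -(expect1 n p) -(@expect_indM k (fun=> 1)) //.
by apply: eq_expect => Q; rewrite mulr1.
Qed.

Lemma expect_ind_ind k l :
  E (fun Q => ind k Q * ind l Q) = if k == l then p else p * p.
Proof.
case: eqVneq => [<-|kl].
  by rewrite -[RHS](expect_ind k); apply: eq_expect => Q; exact: indM_id.
by rewrite expect_indM ?expect_ind // => Q; rewrite ind_setU1 ?ind_setD1 // eq_sym.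
Qed.

Lemma expect_sum_indM (c : 'I_n -> RR) : E (fun Q => \sum_i ind i Q * c i) = p * \sum_i c i.
Proof.
rewrite expect_sum mulr_sumr; apply: eq_bigr => i _.
transitivity (E (fun Q => c i * ind i Q)); first by apply: eq_expect => Q; rewrite mulrC.
by rewrite expectZ expect_ind mulrC.
Qed.

End Resampling.

Definition expect2 n p (F : {set 'I_n} -> {set 'I_n} -> RR) : RR :=
  expect_subset p (fun Q => expect_subset p (F Q)).

Section PairExpectation.

Variables (n : nat) (p : RR).
Implicit Types (F G : {set 'I_n} -> {set 'I_n} -> RR) (Q : {set 'I_n}) (k l : 'I_n).
Local Notation E := (@expect_subset n p).
Local Notation E2 := (@expect2 n p).

Lemma eq_expect2 F G : (forall Q Q', F Q Q' = G Q Q') -> E2 F = E2 G.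
Proof. by move=> FG; apply: eq_expect => Q; apply: eq_expect => Q'; exact: FG. Qed.

Lemma expect2D F G : E2 (fun Q Q' => F Q Q' + G Q Q') = E2 F + E2 G.
Proof. by rewrite /expect2 -expectD; apply: eq_expect => Q; rewrite expectD. Qed.

Lemma expect2Z c F : E2 (fun Q Q' => c * F Q Q') = c * E2 F.
Proof. by rewrite /expect2 -expectZ; apply: eq_expect => Q; rewrite expectZ. Qed.

Lemma expect2N F : E2 (fun Q Q' => - F Q Q') = - E2 F.
Proof. by rewrite /expect2 -expectN; apply: eq_expect => Q; rewrite expectN. Qed.

Lemma expect2_sum (I : finType) (P : pred I) (F : I -> {set 'I_n} -> {set 'I_n} -> RR) :
  E2 (fun Q Q' => \sum_(i | P i) F i Q Q') = \sum_(i | P i) E2 (F i).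
Proof. by rewrite /expect2 -expect_sum; apply: eq_expect => Q; rewrite expect_sum. Qed.

Lemma expect2_l (f : {set 'I_n} -> RR) : E2 (fun Q _ => f Q) = E f.
Proof. by apply: eq_expect => Q; rewrite expect_cst. Qed.

Lemma expect2_r (f : {set 'I_n} -> RR) : E2 (fun _ Q' => f Q') = E f.
Proof. exact: expect_cst. Qed.

Lemma expect2_ind_ind k l : E2 (fun Q Q' => ind k Q * ind l Q') = p * p.
Proof.
transitivity (E (fun Q => p * ind k Q)); last by rewrite expectZ expect_ind.
by apply: eq_expect => Q; rewrite expectZ expect_ind mulrC.
Qed.

Lemma expect2_indM k F : (forall Q Q', F (k |: Q) Q' = F (Q :\ k) Q') ->
  E2 (fun Q Q' => ind k Q * F Q Q') = p * E2 F.
Proof.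
move=> Fk; rewrite /expect2 -(@expect_indM n p k (fun Q => E (F Q))) => [|Q].
  by apply: eq_expect => Q; rewrite expectZ.
by apply: eq_expect => Q'; rewrite Fk.
Qed.

Lemma expect2_resample k F :
  E2 F = E2 (fun Q Q' =>
    p * (p * F (k |: Q) (k |: Q') + (1 - p) * F (k |: Q) (Q' :\ k)) +
    (1 - p) * (p * F (Q :\ k) (k |: Q') + (1 - p) * F (Q :\ k) (Q' :\ k))).
Proof.
rewrite /expect2 (expect_resample _ k); apply: eq_expect => Q.
rewrite (expect_resample _ k (F (k |: Q))) (expect_resample _ k (F (Q :\ k))).
by rewrite -!expectZ -expectD.
Qed.

Hypothesis p01 : 0 <= p <= 1.

Lemma ler_expect2 F G : (forall Q Q', F Q Q' <= G Q Q') -> E2 F <= E2 G.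
Proof. by move=> FG; apply: ler_expect => // Q; apply: ler_expect. Qed.

Lemma expect2_abs_le_sqrt F :
  E2 (fun Q Q' => `|F Q Q'|) <= Num.sqrt (E2 (fun Q Q' => F Q Q' ^+ 2)).
Proof.
rewrite /expect2; apply: le_trans (expect_le_sqrt p01 _) _; rewrite ler_wsqrtr //.
apply: ler_expect => // Q; apply: le_trans (expect_sqr_le p01 (fun Q' => `|F Q Q'|)) _.
by apply: ler_expect => // Q'; rewrite real_normK ?num_real.
Qed.

(* The two mixed outcomes of resampling [k] carry the same weight [p (1 - p)],
   so they may be compared jointly. *)
Lemma ler_expect2_resample k F G :
  (forall Q Q', F (k |: Q) (k |: Q') <= G (k |: Q) (k |: Q')) ->
  (forall Q Q', F (Q :\ k) (Q' :\ k) <= G (Q :\ k) (Q' :\ k)) ->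
  (forall Q Q', F (k |: Q) (Q' :\ k) + F (Q :\ k) (k |: Q') <=
                G (k |: Q) (Q' :\ k) + G (Q :\ k) (k |: Q')) ->
  E2 F <= E2 G.
Proof.
move=> FGin FGout FGmixed; rewrite (expect2_resample k F) (expect2_resample k G).
apply: ler_expect2 => Q Q'.
have := FGin Q Q'; have := FGout Q Q'; have := FGmixed Q Q'.
have q0 : 0 <= p * (1 - p) by case/andP: p01 => p0 p1; rewrite mulr_ge0 ?subr_ge0.
have p2 : 0 <= p * p by rewrite mulr_ge0 //; case/andP: p01.
have q2 : 0 <= (1 - p) * (1 - p) by rewrite mulr_ge0 // subr_ge0; case/andP: p01.
nra.
Qed.

End PairExpectation.

Definition ind_diff n (k : 'I_n) (Q Q' : {set 'I_n}) : RR := ind k Q - ind k Q'.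

Lemma ind_diff_setD1 n (j k : 'I_n) Q Q' :
  j != k -> ind_diff j (Q :\ k) (Q' :\ k) = ind_diff j Q Q'.
Proof. by move=> jk; rewrite /ind_diff !ind_setD1. Qed.

Section SecondMoment.

Variables (n : nat) (p : RR).
Local Notation E2 := (@expect2 n p).

Lemma expect2_ind_diffM (k l : 'I_n) :
  E2 (fun Q Q' => ind_diff k Q Q' * ind_diff l Q Q') = if k == l then 2 * (p - p * p) else 0.
Proof.
transitivity (E2 (fun Q Q' => ind k Q * ind l Q + ind k Q' * ind l Q' +
                  (- (ind k Q * ind l Q') + - (ind l Q * ind k Q')))).
  by apply: eq_expect2 => Q Q'; rewrite /ind_diff; ring.
rewrite !expect2D !expect2N expect2_l expect2_r expect_ind_ind !expect2_ind_ind.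
by case: eqP => _; ring.
Qed.

Lemma expect2_sum_ind_diff_sqr (K : {set 'I_n}) (m : 'I_n -> RR) :
  E2 (fun Q Q' => (\sum_(k in K) ind_diff k Q Q' * m k) ^+ 2) =
  2 * (p - p * p) * \sum_(k in K) m k ^+ 2.
Proof.
transitivity (E2 (fun Q Q' => \sum_(k in K) \sum_(l in K)
                  m k * m l * (ind_diff k Q Q' * ind_diff l Q Q'))).
  apply: eq_expect2 => Q Q'; rewrite expr2 mulr_suml; apply: eq_bigr => k _.
  by rewrite mulr_sumr; apply: eq_bigr => l _; ring.
rewrite expect2_sum mulr_sumr; apply: eq_bigr => k kK.
rewrite expect2_sum (bigD1 k) //= big1 => [|l /andP [_ lk]].
  by rewrite expect2Z expect2_ind_diffM eqxx addr0; ring.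
by rewrite expect2Z expect2_ind_diffM eq_sym (negbTE lk) mulr0.
Qed.

Hypothesis p01 : 0 <= p <= 1.

Lemma expect2_abs_sum_ind_diff_le (K : {set 'I_n}) (m : 'I_n -> RR) :
  E2 (fun Q Q' => `|\sum_(k in K) ind_diff k Q Q' * m k|) <=
  Num.sqrt (2 * p) * Num.sqrt (\sum_k m k ^+ 2).
Proof.
apply: le_trans (expect2_abs_le_sqrt p01 _) _.
rewrite expect2_sum_ind_diff_sqr -sqrtrM; last by case/andP: p01 => p0 _; rewrite mulr_ge0.
apply: ler_wsqrtr; case/andP: p01 => p0 p1.
have sumK : \sum_(k in K) m k ^+ 2 <= \sum_k m k ^+ 2.
  by rewrite [leRHS](bigID (mem K)) /= lerDl sumr_ge0 // => k _; exact: sqr_ge0.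
have sumK0 : 0 <= \sum_(k in K) m k ^+ 2 by rewrite sumr_ge0 // => k _; exact: sqr_ge0.
nra.
Qed.

End SecondMoment.

Definition pospart (x : RR) : RR := Num.max x 0.

Lemma pospart_ge0 x : 0 <= pospart x.
Proof. by rewrite le_max lexx orbT. Qed.

Lemma ler_pospart x : x <= pospart x.
Proof. by rewrite le_max lexx. Qed.

Lemma pospart0 : pospart 0 = 0.
Proof. exact: maxxx. Qed.

Lemma pospart_mono : {homo pospart : x y / x <= y}.
Proof. by move=> x y xy; rewrite /pospart !maxEle; case: ifP; case: ifP => //; lra. Qed.

Lemma pospartB_le x y : y <= x -> pospart x - pospart y <= x - y.
Proof. by move=> yx; rewrite /pospart !maxEle; case: ifP; case: ifP; lra. Qed.

(* Each pair of indices [t], [s] is handled by the monotonicity and the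
   1-Lipschitz property of [pospart]. *)
Lemma bigmax_pospart_le (T : finType) (P : pred T) (t0 : T) (u A : T -> RR) :
  P t0 -> u t0 = 0 -> A t0 = 0 ->
  \big[Num.max/0]_(t | P t) (pospart (u t) + A t) +
  \big[Num.max/0]_(t | P t) (- pospart (u t) + A t) <=
  \big[Num.max/0]_(t | P t) (u t + A t) + \big[Num.max/0]_(t | P t) (- u t + A t).
Proof.
move=> Pt0 u0 A0; set R := (X in _ <= X).
have pair t s : P t -> P s -> (pospart (u t) + A t) + (- pospart (u s) + A s) <= R.
  move=> Pt Ps; have [ust|uts] := lerP (u s) (u t).
    have := pospartB_le ust.
    have := le_bigmax_cond 0 (fun t => u t + A t) Pt.
    have := le_bigmax_cond 0 (fun t => - u t + A t) Ps.
    rewrite /R; lra.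
  have := pospart_mono (ltW uts).
  have := le_bigmax_cond 0 (fun t => u t + A t) Ps.
  have := le_bigmax_cond 0 (fun t => - u t + A t) Pt.
  rewrite /R; lra.
have at0 : pospart (u t0) + A t0 = 0 by rewrite u0 A0 pospart0 addr0.
have at0' : - pospart (u t0) + A t0 = 0 by rewrite u0 A0 pospart0 oppr0 addr0.
have R0 : 0 <= R by rewrite addr_ge0 // bigmax_ge_id.
rewrite -lerBrDr; apply: bigmax_le => [|t Pt].
  by rewrite subr_ge0; apply: bigmax_le => // s Ps; have := pair t0 s Pt0 Ps; lra.
rewrite lerBrDr addrC -lerBrDr; apply: bigmax_le => [|s Ps].
  by have := pair t t0 Pt Pt0; lra.
by have := pair t s Pt Ps; lra.
Qed.

Section Contraction.

Variables (n : nat) (p : RR) (T : finType) (K : {set 'I_n}) (P : {set 'I_n} -> T -> bool).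
Local Notation E2 := (@expect2 n p).

Definition sup_ind_diff (b : T -> 'I_n -> RR) (Q Q' : {set 'I_n}) : RR :=
  \big[Num.max/0]_(t | P Q t) \sum_(k in K) ind_diff k Q Q' * b t k.

Definition pospart_at (b : T -> 'I_n -> RR) (k : 'I_n) (t : T) (j : 'I_n) : RR :=
  if j == k then pospart (b t j) else b t j.

Hypothesis p01 : 0 <= p <= 1.

Lemma expect_sup_centered_le (b : T -> 'I_n -> RR) :
  expect_subset p (fun Q => \big[Num.max/0]_(t | P Q t) \sum_(k in K) (ind k Q - p) * b t k)
  <= E2 (sup_ind_diff b).
Proof.
apply: ler_expect => // Q; apply: bigmax_le => [|t Pt].
  by apply: expect_ge0 => // Q'; exact: bigmax_ge_id.
have -> : \sum_(k in K) (ind k Q - p) * b t k =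
          expect_subset p (fun Q' => \sum_(k in K) ind_diff k Q Q' * b t k).
  rewrite expect_sum; apply: eq_bigr => k _.
  transitivity (expect_subset p (fun Q' => ind k Q * b t k + - (b t k * ind k Q'))).
    by rewrite expectD expectN expect_cst expectZ expect_ind; ring.
  by apply: eq_expect => Q'; rewrite /ind_diff; ring.
apply: ler_expect => // Q'.
exact: (le_bigmax_cond 0 (fun t => \sum_(k in K) ind_diff k Q Q' * b t k) Pt).
Qed.

Variable t0 : T.
Hypothesis Pt0 : forall Q, P Q t0.

Lemma sup_ind_diff_split (b c : T -> 'I_n -> RR) (k : 'I_n) (X Y Q Q' : {set 'I_n}) :
  k \in K -> P X =1 P Q -> (forall j, j != k -> ind_diff j X Y = ind_diff j Q Q') ->
  (forall t j, j != k -> c t j = b t j) ->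
  sup_ind_diff c X Y = \big[Num.max/0]_(t | P Q t)
    (ind_diff k X Y * c t k + \sum_(j in K | j != k) ind_diff j Q Q' * b t j).
Proof.
move=> kK PXQ dXY cb; apply: eq_big => [t|t _]; first exact: PXQ.
rewrite (bigD1 k) //=; congr (_ + _); apply: eq_bigr => j /andP [_ jk].
by rewrite cb // dXY.
Qed.

Lemma sup_ind_diff_pospart_at (b : T -> 'I_n -> RR) (k : 'I_n) :
  (k \in K -> forall Q t, P (k |: Q) t = P (Q :\ k) t) -> (forall j, b t0 j = 0) ->
  E2 (sup_ind_diff (pospart_at b k)) <= E2 (sup_ind_diff b).
Proof.
move=> Pk b0; have [kK|kK] := boolP (k \in K); last first.
  suff -> : E2 (sup_ind_diff (pospart_at b k)) = E2 (sup_ind_diff b) by [].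
  apply: eq_expect2 => Q Q'; apply: eq_bigr => t _; apply: eq_bigr => j jK.
  by rewrite /pospart_at; case: eqP jK kK => // -> ->.
have PD X : P X =1 P (X :\ k).
  move=> t; case: (boolP (k \in X)) => kX; last by rewrite setD1_notin.
  by rewrite -{1}(setD1K kX) Pk // setD1D1.
have bk t j : j != k -> pospart_at b k t j = b t j by rewrite /pospart_at => /negbTE ->.
have split c X Y := @sup_ind_diff_split b c k X Y (X :\ k) (Y :\ k) kK (PD X)
  (fun j jk => esym (ind_diff_setD1 X Y jk)).
have zero c X Y : (forall t j, j != k -> c t j = b t j) -> ind_diff k X Y = 0 ->
    sup_ind_diff c X Y = \big[Num.max/0]_(t | P (X :\ k) t)
                           \sum_(j in K | j != k) ind_diff j (X :\ k) (Y :\ k) * b t j.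
  by move=> cb Z0; rewrite split //; apply: eq_bigr => t _; rewrite Z0 mul0r add0r.
apply: (ler_expect2_resample (k := k) p01) => Q Q'.
- by rewrite !zero // /ind_diff !ind_setU11 subrr.
- by rewrite !zero // /ind_diff !ind_setD11 subrr.
rewrite !(split _ _ _ bk) !(split b) // !setD1U1 !setD1D1.
have -> : ind_diff k (k |: Q) (Q' :\ k) = 1 by rewrite /ind_diff ind_setU11 ind_setD11 subr0.
have -> : ind_diff k (Q :\ k) (k |: Q') = -1 by rewrite /ind_diff ind_setU11 ind_setD11 sub0r.
have bkk t : pospart_at b k t k = pospart (b t k) by rewrite /pospart_at eqxx.
under [X in X + _ <= _]eq_bigr do rewrite mul1r bkk.
under [X in _ + X <= _]eq_bigr do rewrite mulN1r bkk.
under [X in _ <= X + _]eq_bigr do rewrite mul1r.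
under [X in _ <= _ + X]eq_bigr do rewrite mulN1r.
apply: bigmax_pospart_le (Pt0 _) (b0 k) _.
by rewrite big1 // => j _; rewrite b0 mulr0.
Qed.

Lemma sup_ind_diff_pospart (a : T -> 'I_n -> RR) :
  (forall k, k \in K -> forall Q t, P (k |: Q) t = P (Q :\ k) t) -> (forall k, a t0 k = 0) ->
  E2 (sup_ind_diff (fun t k => pospart (a t k))) <= E2 (sup_ind_diff a).
Proof.
move=> Pk a0; pose a_ m t (j : 'I_n) := if (j < m)%N then a t j else pospart (a t j).
have chain m : (m <= n)%N -> E2 (sup_ind_diff (a_ 0%N)) <= E2 (sup_ind_diff (a_ m)).
  elim: m => // m IH lt_mn; apply: le_trans (IH (ltnW lt_mn)) _.
  set k := Ordinal lt_mn.
  have -> : E2 (sup_ind_diff (a_ m)) = E2 (sup_ind_diff (pospart_at (a_ m.+1) k)).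
    apply/eq_expect2 => Q Q'; apply: eq_bigr => t _; apply: eq_bigr => j _.
    by rewrite /pospart_at /a_ -(inj_eq val_inj) /= ltnS; case: ltngtP.
  apply: sup_ind_diff_pospart_at => [/Pk //|j].
  by rewrite /a_ a0 pospart0; case: ifP.
have := chain n (leqnn n).
rewrite (_ : E2 (sup_ind_diff (a_ n)) = E2 (sup_ind_diff a)) //.
by apply/eq_expect2 => Q Q'; apply: eq_bigr => t _; apply: eq_bigr => j _; rewrite /a_ ltn_ord.
Qed.

Lemma expect_sup_centered_pospart_le (a : T -> 'I_n -> RR) :
  (forall k, k \in K -> forall Q t, P (k |: Q) t = P (Q :\ k) t) -> (forall k, a t0 k = 0) ->
  expect_subset p (fun Q => \big[Num.max/0]_(t | P Q t)
                              \sum_(k in K) (ind k Q - p) * pospart (a t k))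
  <= E2 (sup_ind_diff a).
Proof.
by move=> Pk a0; apply: le_trans (expect_sup_centered_le _) (sup_ind_diff_pospart Pk a0).
Qed.

End Contraction.

Lemma ler_sum_sub (I : finType) (P P' : pred I) (g : I -> RR) :
  (forall i, P i -> P' i) -> (forall i, 0 <= g i) ->
  \sum_(i | P i) g i <= \sum_(i | P' i) g i.
Proof.
move=> PP' g0; rewrite big_mkcond [leRHS]big_mkcond; apply: ler_sum => i _.
by case: ifP => [/PP' ->|_] //; case: ifP.
Qed.

Lemma ler_sum_pospart n (J Y : {set 'I_n}) (f : 'I_n -> RR) :
  J \subset Y -> \sum_(j in J) f j <= \sum_(j in Y) pospart (f j).
Proof.
move=> /subsetP JY; apply: le_trans (ler_sum_sub (P := mem J) JY (fun j => pospart_ge0 (f j))).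
by apply: ler_sum => j _; exact: ler_pospart.
Qed.

Lemma sum_pospart_subset n (Y : {set 'I_n}) (f : 'I_n -> RR) :
  exists2 J : {set 'I_n}, J \subset Y & \sum_(j in Y) pospart (f j) = \sum_(j in J) f j.
Proof.
exists [set j in Y | 0 <= f j]; first by apply/subsetP => j; rewrite inE => /andP [].
rewrite big_mkcond [RHS]big_mkcond; apply: eq_bigr => j _; rewrite inE.
by case: (j \in Y) => //=; rewrite /pospart maxEle; case: ifP; case: ifP; lra.
Qed.

Lemma norm_sum_le_cutnorm n (B : 'M[RR]_n) (I J : {set 'I_n}) :
  `|\sum_(i in I) \sum_(j in J) B i j| <= cutnorm B.
Proof.
apply: le_trans (le_bigmax 0 (fun I : {set 'I_n} => \big[Num.max/0]_(J : {set 'I_n})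
                     `|\sum_(i in I) \sum_(j in J) B i j|) I).
exact: (le_bigmax 0 (fun J : {set 'I_n} => `|\sum_(i in I) \sum_(j in J) B i j|) J).
Qed.

Lemma cutnorm_ge0 n (B : 'M[RR]_n) : 0 <= cutnorm B.
Proof. exact: le_trans (normr_ge0 _) (norm_sum_le_cutnorm B set0 set0). Qed.

Lemma sum_oppmx n (B : 'M[RR]_n) (I J : {set 'I_n}) :
  \sum_(i in I) \sum_(j in J) (- B) i j = - \sum_(i in I) \sum_(j in J) B i j.
Proof.
rewrite -sumrN; apply: eq_bigr => i _; rewrite -sumrN.
by apply: eq_bigr => j _; rewrite mxE.
Qed.

Lemma cutnormN n (B : 'M[RR]_n) : cutnorm (- B) = cutnorm B.
Proof. by apply: eq_bigr => I _; apply: eq_bigr => J _; rewrite sum_oppmx normrN. Qed.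

Definition cutpos n (B : 'M[RR]_n) (X Y : {set 'I_n}) : RR :=
  \big[Num.max/0]_(I : {set 'I_n} | I \subset X) \big[Num.max/0]_(J : {set 'I_n} | J \subset Y)
     \sum_(i in I) \sum_(j in J) B i j.

Lemma cutpos_ge0 n (B : 'M[RR]_n) (X Y : {set 'I_n}) : 0 <= cutpos B X Y.
Proof. exact: bigmax_ge_id. Qed.

Lemma sum_le_cutpos n (B : 'M[RR]_n) (X Y I J : {set 'I_n}) : I \subset X -> J \subset Y ->
  \sum_(i in I) \sum_(j in J) B i j <= cutpos B X Y.
Proof.
move=> IX JY.
apply: le_trans (le_bigmax_cond 0 (fun I : {set 'I_n} =>
   \big[Num.max/0]_(J : {set 'I_n} | J \subset Y) \sum_(i in I) \sum_(j in J) B i j) IX).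
exact: (le_bigmax_cond 0 (fun J : {set 'I_n} => \sum_(i in I) \sum_(j in J) B i j) JY).
Qed.

Section Fluctuations.

Variables (n : nat) (p : RR) (B : 'M[RR]_n) (S : {set 'I_n}).
Local Notation E := (@expect_subset n p).
Local Notation E2 := (@expect2 n p).

Definition row_fluct (Q : {set 'I_n}) : RR :=
  \big[Num.max/0]_(J : {set 'I_n} | J \subset ~: S)
     \sum_(i in S) (ind i Q - p) * pospart (\sum_(j in J) B i j).

Definition col_fluct (Q : {set 'I_n}) : RR :=
  \big[Num.max/0]_(I : {set 'I_n} | I \subset Q :&: S)
     \sum_(j in ~: S) (ind j Q - p) * pospart (\sum_(i in I) B i j).

(* Bound the columns of [Q :\: S] by the positive parts of their sums and
   centre the indicators of [Q]; the same step on the rows of [Q :&: S] then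
   leaves a cut of [B]. *)
Lemma cutpos_split_le (Q : {set 'I_n}) : 0 <= p ->
  cutpos B (Q :&: S) (Q :\: S) <= p * (p * cutnorm B + row_fluct Q) + col_fluct Q.
Proof.
move=> p0.
have rhs0 : 0 <= p * (p * cutnorm B + row_fluct Q) + col_fluct Q.
  by rewrite addr_ge0 ?mulr_ge0 ?addr_ge0 ?mulr_ge0 ?cutnorm_ge0 ?bigmax_ge_id.
have centre (K : {set 'I_n}) (g : 'I_n -> RR) :
    \sum_(j in K) ind j Q * g j = p * \sum_(j in K) g j + \sum_(j in K) (ind j Q - p) * g j.
  by rewrite mulr_sumr -big_split; apply: eq_bigr => j _ /=; ring.
apply: bigmax_le => // I IQS; apply: bigmax_le => // J JQS.
rewrite exchange_big /=; apply: le_trans (ler_sum_pospart _ JQS) _.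
rewrite setDE sum_setI_ind centre; apply: lerD; last first.
  exact: (le_bigmax_cond 0 (fun I : {set 'I_n} =>
    \sum_(j in ~: S) (ind j Q - p) * pospart (\sum_(i in I) B i j)) IQS).
apply: ler_wpM2l => //.
have [J' J'S ->] := sum_pospart_subset (~: S) (fun j => \sum_(i in I) B i j).
rewrite exchange_big /=; apply: le_trans (ler_sum_pospart _ IQS) _.
rewrite sum_setI_ind centre; apply: lerD; last first.
  exact: (le_bigmax_cond 0 (fun J : {set 'I_n} =>
    \sum_(i in S) (ind i Q - p) * pospart (\sum_(j in J) B i j)) J'S).
apply: ler_wpM2l => //.
have [I' _ ->] := sum_pospart_subset S (fun i => \sum_(j in J') B i j).
exact: le_trans (ler_norm _) (norm_sum_le_cutnorm _ _ _).
Qed.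

Hypothesis p01 : 0 <= p <= 1.

Lemma expect_row_fluct_le : E row_fluct <= Num.sqrt (2 * p) * colnorm B.
Proof.
apply: le_trans (expect_sup_centered_pospart_le (K := S)
   (P := fun _ (J : {set 'I_n}) => J \subset ~: S) (a := fun J i => \sum_(j in J) B i j)
   p01 (fun _ => sub0set _) (fun _ _ _ _ => erefl) (fun _ => big_set0 _ _ _)) _.
apply: (@le_trans _ _ (E2 (fun Q Q' => \sum_j `|\sum_(i in S) ind_diff i Q Q' * B i j|))).
  apply: ler_expect2 => // Q Q'; apply: bigmax_le => [|J _].
    by apply: sumr_ge0 => j _; exact: normr_ge0.
  rewrite (eq_bigr (fun i => \sum_(j in J) ind_diff i Q Q' * B i j)); last first.
    by move=> i _; rewrite mulr_sumr.
  rewrite exchange_big /=; apply: le_trans (ler_sum _ (fun j _ => ler_norm _)) _.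
  exact: ler_sum_sub (fun _ _ => isT) (fun j => normr_ge0 _).
rewrite expect2_sum /colnorm mulr_sumr; apply: ler_sum => j _.
exact: (expect2_abs_sum_ind_diff_le p01 S (fun i => B i j)).
Qed.

Lemma expect_col_fluct_le : E col_fluct <= p * Num.sqrt (2 * p) * colnorm B^T.
Proof.
have p0 : 0 <= p by case/andP: p01.
have PS k : k \in ~: S -> forall Q (I : {set 'I_n}),
    (I \subset (k |: Q) :&: S) = (I \subset (Q :\ k) :&: S).
  rewrite inE => kS Q I; suff -> : (k |: Q) :&: S = (Q :\ k) :&: S by [].
  apply/setP => x; rewrite !inE.
  by case: eqP => // ->; rewrite (negbTE kS) andbF.
apply: le_trans (expect_sup_centered_pospart_le (K := ~: S)
   (P := fun Q (I : {set 'I_n}) => I \subset Q :&: S) (a := fun I j => \sum_(i in I) B i j)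
   p01 (fun _ => sub0set _) PS (fun _ => big_set0 _ _ _)) _.
pose v i Q Q' := \sum_(j in ~: S) ind_diff j Q Q' * B i j.
apply: (@le_trans _ _ (E2 (fun Q Q' => \sum_(i in S) ind i Q * `|v i Q Q'|))).
  apply: ler_expect2 => // Q Q'; apply: bigmax_le => [|I IQS].
    by apply: sumr_ge0 => i _; rewrite mulr_ge0 ?ind_ge0.
  rewrite (eq_bigr (fun j => \sum_(i in I) ind_diff j Q Q' * B i j)); last first.
    by move=> j _; rewrite mulr_sumr.
  rewrite exchange_big /= -sum_setI_ind; apply: le_trans (ler_sum _ (fun i _ => ler_norm _)) _.
  exact: ler_sum_sub (subsetP IQS) (fun i => normr_ge0 _).
rewrite expect2_sum /colnorm !mulr_sumr.
have rowB i : \sum_j B^T j i ^+ 2 = \sum_j B i j ^+ 2 by apply: eq_bigr => j _; rewrite mxE.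
under [leRHS]eq_bigr do rewrite rowB.
apply: le_trans _ (ler_sum_sub (P := mem S) (fun _ _ => isT) _); last first.
  by move=> i; rewrite !mulr_ge0 ?sqrtr_ge0.
apply: ler_sum => i iS; rewrite expect2_indM; last first.
  move=> Q Q'; congr `|_|; apply: eq_bigr => j; rewrite inE => jS.
  have ji : j != i by apply: contraNneq jS => ->.
  by rewrite /ind_diff ind_setU1 ?ind_setD1.
rewrite -mulrA ler_wpM2l //.
exact: (expect2_abs_sum_ind_diff_le p01 (~: S) (fun j => B i j)).
Qed.

Lemma expect_cutpos_split_le :
  E (fun Q => cutpos B (Q :&: S) (Q :\: S)) <=
  p * (p * cutnorm B + Num.sqrt (2 * p) * colnorm B) + p * Num.sqrt (2 * p) * colnorm B^T.
Proof.
have p0 : 0 <= p by case/andP: p01.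
apply: le_trans (ler_expect p01 (fun Q => cutpos_split_le Q p0)) _.
rewrite expectD expectZ expectD expect_cst lerD ?expect_col_fluct_le // ler_wpM2l //.
by rewrite lerD // expect_row_fluct_le.
Qed.

End Fluctuations.

Lemma expect_exchange n p r (F : {set 'I_n} -> {set 'I_n} -> RR) :
  expect_subset p (fun Q => expect_subset r (F Q)) =
  expect_subset r (fun S => expect_subset p (fun Q => F Q S)).
Proof.
rewrite /expect_subset; under eq_bigr do rewrite mulr_sumr.
rewrite exchange_big /=; apply: eq_bigr => S _.
by rewrite mulr_sumr; apply: eq_bigr => Q _; ring.
Qed.

Lemma half01 : 0 <= (2^-1 : RR) <= 1.
Proof. by rewrite invr_ge0 ler0n invf_le1 ?ler1n ?ltr0n. Qed.

Lemma expect_half_ind_notin n (i j : 'I_n) : i != j ->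
  4 * expect_subset 2^-1 (fun S => ind i S * (1 - ind j S)) = 1.
Proof.
move=> ij; rewrite expect_indM => [|S]; last by rewrite /ind !inE eq_sym (negbTE ij).
rewrite expectD expectN expect_cst expect_ind.
have two0 : (2 : RR) != 0 by rewrite pnatr_eq0.
by field.
Qed.

(* An off-diagonal pair [(i, j)] lies in [S x ~: S] with probability [1/4]
   for a fair random subset [S]: this is where the factor [4] comes from. *)
Lemma cutpos_decouple n (B : 'M[RR]_n) (Q : {set 'I_n}) : (forall i, B i i = 0) ->
  cutpos B Q Q <= 4 * expect_subset 2^-1 (fun S => cutpos B (Q :&: S) (Q :\: S)).
Proof.
move=> B0; apply: bigmax_le => [|I IQ].
  by rewrite mulr_ge0 ?ler0n // expect_ge0 ?half01 // => S; exact: bigmax_ge_id.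
apply: bigmax_le => [|J JQ].
  by rewrite mulr_ge0 ?ler0n // expect_ge0 ?half01 // => S; exact: bigmax_ge_id.
have -> : \sum_(i in I) \sum_(j in J) B i j =
    4 * expect_subset 2^-1 (fun S => \sum_(i in I :&: S) \sum_(j in J :\: S) B i j).
  transitivity (4 * expect_subset 2^-1 (fun S =>
      \sum_(i in I) \sum_(j in J) B i j * (ind i S * (1 - ind j S)))).
    rewrite expect_sum mulr_sumr; apply: eq_bigr => i _.
    rewrite expect_sum mulr_sumr; apply: eq_bigr => j _.
    rewrite expectZ mulrCA; have [<-|ij] := eqVneq i j; first by rewrite B0 !mul0r.
    by rewrite expect_half_ind_notin // mulr1.
  congr (_ * _); apply: eq_expect => S; rewrite setIC sum_setI_ind; apply: eq_bigr => i _.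
  by rewrite sum_setD_ind mulr_sumr; apply: eq_bigr => j _; ring.
rewrite ler_wpM2l ?ler0n //; apply: ler_expect => [|S]; first exact: half01.
by rewrite sum_le_cutpos ?setSI ?setSD.
Qed.

Lemma expect_cutpos_le n p (B : 'M[RR]_n) : 0 <= p <= 1 -> (forall i, B i i = 0) ->
  expect_subset p (fun Q => cutpos B Q Q) <=
  4 * (p * (p * cutnorm B + Num.sqrt (2 * p) * colnorm B) + p * Num.sqrt (2 * p) * colnorm B^T).
Proof.
move=> p01 B0; apply: le_trans (ler_expect p01 (fun Q => cutpos_decouple Q B0)) _.
rewrite expectZ expect_exchange ler_wpM2l ?ler0n //.
rewrite -[leRHS](expect_cst n 2^-1); apply: ler_expect => [|S]; first exact: half01.
exact: expect_cutpos_split_le.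
Qed.

Lemma norm_sum_le_cutpos n (B : 'M[RR]_n) (X Y I J : {set 'I_n}) :
  I \subset X -> J \subset Y ->
  `|\sum_(i in I) \sum_(j in J) B i j| <= cutpos B X Y + cutpos (- B) X Y.
Proof.
move=> IX JY; have := sum_le_cutpos B IX JY; have := sum_le_cutpos (- B) IX JY.
have := cutpos_ge0 B X Y; have := cutpos_ge0 (- B) X Y; rewrite sum_oppmx.
by case: (lerP 0 (\sum_(i in I) \sum_(j in J) B i j)) => [/ger0_norm|/ltr0_norm] ->; lra.
Qed.

Lemma sum_diagpart_row n (A : 'M[RR]_n) i (J : {set 'I_n}) :
  \sum_(j in J) diagpart A i j = if i \in J then A i i else 0.
Proof.
rewrite big_mkcond (bigD1 i) //= big1 ?addr0 => [|j ji]; first by rewrite mxE eqxx.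
by rewrite mxE eq_sym (negbTE ji); case: ifP.
Qed.

Lemma cutnorm_sub_le n (A : 'M[RR]_n) (Q : {set 'I_n}) :
  cutnorm_sub Q A <= cutpos (A - diagpart A) Q Q + cutpos (- (A - diagpart A)) Q Q
                     + \sum_i ind i Q * `|A i i|.
Proof.
set B := A - diagpart A.
have rhs0 : 0 <= cutpos B Q Q + cutpos (- B) Q Q + \sum_i ind i Q * `|A i i|.
  by rewrite !addr_ge0 ?bigmax_ge_id // sumr_ge0 // => i _; rewrite mulr_ge0 ?ind_ge0.
apply: bigmax_le => // I IQ; apply: bigmax_le => // J JQ.
have -> : \sum_(i in I) \sum_(j in J) A i j =
          \sum_(i in I) \sum_(j in J) B i j + \sum_(i in I) \sum_(j in J) diagpart A i j.
  rewrite -big_split; apply: eq_bigr => i _ /=; rewrite -big_split.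
  by apply: eq_bigr => j _ /=; rewrite /B !mxE subrK.
apply: le_trans (ler_normD _ _) _; rewrite lerD ?norm_sum_le_cutpos //.
under eq_bigr do rewrite sum_diagpart_row.
apply: le_trans (ler_norm_sum _ _ _) _.
apply: (@le_trans _ _ (\sum_(i in I) `|A i i|)).
  by apply: ler_sum => i _; case: ifP; rewrite ?normr0 ?normr_ge0.
apply: le_trans (ler_sum_sub (subsetP IQ) (fun i => normr_ge0 (A i i))) _.
rewrite big_mkcond; apply: ler_sum => i _.
by rewrite /ind; case: (i \in Q); rewrite ?mul1r ?mul0r.
Qed.

Lemma sum_norm_diag_le n (A : 'M[RR]_n) : \sum_i `|A i i| <= 2 * cutnorm (diagpart A).
Proof.
have diag_sum (I : {set 'I_n}) : \sum_(i in I) \sum_(j in I) diagpart A i j = \sum_(i in I) A i i.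
  by apply: eq_bigr => i iI; rewrite sum_diagpart_row iI.
set P := [set i | 0 <= A i i].
have -> : \sum_i `|A i i| = \sum_(i in P) A i i - \sum_(i in ~: P) A i i.
  rewrite (bigID (mem P)) /= -sumrN; congr (_ + _).
    by apply: eq_bigr => i; rewrite inE => /ger0_norm.
  by apply: eq_big => i; rewrite !inE // -ltNge => /ltr0_norm.
have := norm_sum_le_cutnorm (diagpart A) P P.
have := norm_sum_le_cutnorm (diagpart A) (~: P) (~: P).
rewrite !diag_sum; have := ler_norm (\sum_(i in P) A i i).
have := ler_norm (- \sum_(i in ~: P) A i i); rewrite normrN; lra.
Qed.

Lemma colnorm_ge0 n (A : 'M[RR]_n) : 0 <= colnorm A.
Proof. by apply: sumr_ge0 => j _; exact: sqrtr_ge0. Qed.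

Lemma colnorm_le n (A B : 'M[RR]_n) :
  (forall i j, `|B i j| <= `|A i j|) -> colnorm B <= colnorm A.
Proof.
move=> BA; apply: ler_sum => j _; apply: ler_wsqrtr; apply: ler_sum => i _.
rewrite -[B i j ^+ 2]real_normK ?num_real // -[A i j ^+ 2]real_normK ?num_real //.
by rewrite lerXn2r ?nnegrE.
Qed.

Lemma norm_offdiag_le n (A : 'M[RR]_n) i j : `|(A - diagpart A) i j| <= `|A i j|.
Proof. by rewrite !mxE; case: eqP => _; rewrite ?subrr ?normr0 ?subr0. Qed.

Lemma expect_cutnorm_sub_le n p (A : 'M[RR]_n) : 0 <= p <= 1 ->
  expect_subset p (fun Q => cutnorm_sub Q A) <=
  8 * (p ^+ 2 * cutnorm (A - diagpart A) + p * Num.sqrt (2 * p) * (colnorm A + colnorm A^T))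
  + 2 * p * cutnorm (diagpart A).
Proof.
move=> p01; have p0 : 0 <= p by case/andP: p01.
set B := A - diagpart A; set s := Num.sqrt (2 * p).
have B0 i : B i i = 0 by rewrite !mxE eqxx subrr.
have NB0 i : (- B) i i = 0 by rewrite mxE B0 oppr0.
apply: le_trans (ler_expect p01 (cutnorm_sub_le A)) _.
rewrite !expectD expect_sum_indM -/B.
have col i j : `|B i j| <= `|A i j| by exact: norm_offdiag_le.
have colB : colnorm B <= colnorm A by exact: colnorm_le.
have colNB : colnorm (- B) <= colnorm A by apply: colnorm_le => i j; rewrite mxE normrN.
have colBT : colnorm B^T <= colnorm A^T.
  by apply: colnorm_le => i j; rewrite [_^T i j]mxE [_^T i j]mxE.
have colNBT : colnorm (- B)^T <= colnorm A^T.
  by apply: colnorm_le => i j; rewrite [_^T i j]mxE [_^T i j]mxE mxE normrN.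
have := expect_cutpos_le p01 B0; have := expect_cutpos_le p01 NB0; rewrite cutnormN -/s.
have := ler_wpM2l p0 (sum_norm_diag_le A).
have ps0 : 0 <= p * s by rewrite mulr_ge0 ?sqrtr_ge0.
have := ler_wpM2l ps0 colB; have := ler_wpM2l ps0 colNB.
have := ler_wpM2l ps0 colBT; have := ler_wpM2l ps0 colNBT.
rewrite expr2; lra.
Qed.

Lemma sqrtr_2M_le (x : RR) : 0 <= x -> Num.sqrt (2 * x) <= 2 * Num.sqrt x.
Proof.
move=> x0; rewrite -[X in X * Num.sqrt x](@ger0_norm _ 2) ?ler0n // -sqrtr_sqr.
rewrite -sqrtrM ?sqr_ge0 // ler_wsqrtr // ler_wpM2r // expr2; lra.
Qed.

Theorem theorem1p2 :
  exists C : RR, 0 < C /\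
  forall (n : nat) (A : 'M[RR]_n) (q : RR),
    0 < q -> q <= n%:R ->
    let p := q / n%:R in
    expect_subset p (fun Q => cutnorm_sub Q A) <=
      C * (p ^+ 2 * cutnorm (A - diagpart A) + p * cutnorm (diagpart A)
           + p * Num.sqrt p * (colnorm A + colnorm A^T)).
Proof.
exists 16; split => [|n A q q0 qn /=]; first by rewrite ltr0n.
set p := q / n%:R.
have n0 : 0 < n%:R :> RR by exact: lt_le_trans qn.
have p0 : 0 <= p by rewrite divr_ge0 ?ltW.
have p01 : 0 <= p <= 1 by rewrite p0 ler_pdivrMr // mul1r.
apply: le_trans (expect_cutnorm_sub_le A p01) _.
have col0 : 0 <= colnorm A + colnorm A^T by rewrite addr_ge0 ?colnorm_ge0.
have := ler_wpM2r col0 (ler_wpM2l p0 (sqrtr_2M_le p0)).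
have : 0 <= p ^+ 2 * cutnorm (A - diagpart A) by rewrite mulr_ge0 ?sqr_ge0 ?cutnorm_ge0.
have : 0 <= p * cutnorm (diagpart A) by rewrite mulr_ge0 ?cutnorm_ge0.
lra.
Qed.
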